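(* For every $n\geq0$, the dimension of the $n$th graded component of the quotient $\mathbf{ASM}/\mathcal{I}_{\operatorname{io}}$ is $\left\lfloor\frac{(n-1)^2}{4}\right\rfloor+1$.
   Context: An ASM of size $n$ is an $n\times n$ matrix over $\{0,1,-1\}$ whose nonzero entries in every row and column alternate in sign, starting and ending with $+1$; $\operatorname{io}(\delta)$ is the number of entries equal to $-1$ in $\delta$. $\mathbf{ASM}$ is the graded vector space (over $\mathbb{K}$ of characteristic zero) with basis $(\mathbf{F}_{M^\delta})$ indexed by ASMs $\delta$, the degree of $\mathbf{F}_{M^\delta}$ being the size of $\delta$. $\mathcal{I}_{\operatorname{io}}$ is the subspace spanned by all $\mathbf{F}_{M^{\delta_1}}-\mathbf{F}_{M^{\delta_2}}$ with $\delta_1,\delta_2$ ASMs of the same size satisfying $\operatorname{io}(\delta_1)=\operatorname{io}(\delta_2)$; the quotient is graded by size. *)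

From HB Require Import structures.
From mathcomp Require Import all_boot all_order all_algebra.
Set Implicit Arguments. Unset Strict Implicit. Unset Printing Implicit Defensive.
Import Order.TTheory GRing.Theory Num.Theory.

(* Entries in {0, 1, -1}: None = 0, Some true = +1, Some false = -1. *)
Definition entry := option bool.
Definition entry_val (e : entry) : int :=
  match e with None => 0%R | Some true => 1%R | Some false => (-1)%R end.

Definition alternating (s : seq int) : bool :=
  let t := [seq x <- s | x != 0%R] in
  (t == [seq ((-1) ^+ k)%R | k <- iota 0 (size t)]) && odd (size t).

Definition is_asm n (A : 'M[entry]_n) : bool :=
  [forall i : 'I_n, alternating [seq entry_val (A i j) | j <- enum 'I_n]] &&
  [forall j : 'I_n, alternating [seq entry_val (A i j) | i <- enum 'I_n]].

Definition ASM n : finType := {A : 'M[entry]_n | is_asm A}.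

Definition io n (d : ASM n) : nat :=
  #|[set ij : 'I_n * 'I_n | entry_val (val d ij.1 ij.2) == (-1)%R]|.

Definition ASMn (K : fieldType) n : vectType K := {ffun ASM n -> K^o}.

Definition F_M (K : fieldType) n (d : ASM n) : ASMn K n :=
  [ffun x => ((x == d)%:R)%R].

Definition I_io (K : fieldType) n : {vspace ASMn K n} :=
  <<[seq (F_M K d1 - F_M K d2)%R | d1 <- enum (ASM n), d2 <- [seq d <- enum (ASM n) | io d == io d1]]>>%VS.

Definition quot_dim (K : fieldType) n : nat :=
  (\dim (fullv : {vspace ASMn K n}) - \dim (I_io K n))%N.

From HB Require Import structures.
From mathcomp Require Import all_boot all_order all_algebra zify.
Set Implicit Arguments. Unset Strict Implicit. Unset Printing Implicit Defensive.
Import Order.TTheory GRing.Theory Num.Theory.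

(* The linear map F_delta |-> e_(io delta) has kernel I_io, so the dimension of
   the quotient is the number of values of io; these are exactly 0, ..., m with
   m = sum_i min(i, n-1-i) = floor((n-1)^2/4).
   Upper bound: the partial column sums of an ASM lie in {0, 1} and those of the
   first i rows add up to i, so row i has at most min(i, n-1-i) entries -1.
   Every smaller value is attained by a matrix each of whose rows is either a
   lone +1 or a full alternating block with min(i, n-1-i) entries -1: these
   weights never grow by more than one, so their subset sums fill the interval. *)

Local Open Scope ring_scope.

Definition partial_sums01 (b : int) (s : seq int) : Prop :=
  forall k, (b + \sum_(x <- take k s) x == 0) || (b + \sum_(x <- take k s) x == 1).

Lemma partial_sums01_cons b x s :
  partial_sums01 b (x :: s) <-> ((b == 0) || (b == 1)) /\ partial_sums01 (b + x) s.
Proof.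
split=> [P | [Hb P] [|k] /=]; last 2 first.
- by rewrite big_nil addr0.
- by rewrite big_cons addrA.
split; first by have := P 0%N; rewrite take0 big_nil addr0.
by move=> k; have := P k.+1; rewrite /= big_cons addrA.
Qed.

Lemma partial_sums01_init b s : partial_sums01 b s -> (b == 0) || (b == 1).
Proof. by move=> /(_ 0%N); rewrite take0 big_nil addr0. Qed.

Lemma partial_sums01_filter0 b s :
  partial_sums01 b s <-> partial_sums01 b [seq x <- s | x != 0].
Proof.
elim: s b => [//|x s IH] b /=.
have [-> | nx] /= := eqVneq x 0; last by rewrite !partial_sums01_cons IH.
rewrite partial_sums01_cons addr0 IH.
by split=> [[] | P] //; split=> //; apply: partial_sums01_init P.
Qed.

Lemma iota1 m : iota 1 m = map succn (iota 0 m).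
Proof. by rewrite -(iotaDl 1 0 m). Qed.

Definition signs m : seq int := [seq (-1) ^+ k | k <- iota 0 m].
Definition signs_neg m : seq int := [seq (-1) ^+ k.+1 | k <- iota 0 m].

Arguments signs : simpl never.
Arguments signs_neg : simpl never.

Lemma signsS m : signs m.+1 = 1 :: signs_neg m.
Proof. by rewrite /signs /signs_neg /= expr0 iota1 -map_comp. Qed.

Lemma signs_negS m : signs_neg m.+1 = -1 :: signs m.
Proof.
rewrite /signs /signs_neg /= expr1 iota1 -map_comp.
by congr (_ :: _); apply: eq_map => k /=; rewrite !exprS mulrA mulrNN mulr1 mul1r.
Qed.

Lemma sum_signs m :
  \sum_(x <- signs m) x = (odd m)%:R /\ \sum_(x <- signs_neg m) x = - (odd m)%:R.
Proof.
elim: m => [|m [IH IHneg]]; first by rewrite !big_nil oppr0.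
by rewrite signsS signs_negS !big_cons IH IHneg /=; case: (odd m).
Qed.

Lemma partial_sums01_signs t : all (fun x => x != 0) t ->
  (partial_sums01 0 t <-> t = signs (size t)) /\
  (partial_sums01 1 t <-> t = signs_neg (size t)).
Proof.
elim: t => [|x t IH] /=.
  by split; split=> // _ k; rewrite big_nil addr0 eqxx ?orbT.
case/andP=> nx /IH [IH0 IH1]; rewrite signsS signs_negS !partial_sums01_cons.
split; split.
- case=> _; rewrite add0r => P.
  have /orP[/eqP x0 | /eqP x1] := partial_sums01_init P; first by rewrite x0 eqxx in nx.
  by subst x; move/IH1: P => <-.
- by move=> [-> e]; split=> //; rewrite add0r; apply/IH1.
- case=> _ P.
  have /orP[/eqP x0 | /eqP x1] := partial_sums01_init P.
    have -> : x = -1 by rewrite -(addKr 1 x) x0 addr0.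
    by move: P; rewrite x0 => /IH0 <-.
  have x0 : x = 0 by rewrite -(addKr 1 x) x1 subrr.
  by rewrite x0 eqxx in nx.
- by move=> [-> e]; split=> //; rewrite subrr; apply/IH0.
Qed.

Lemma alternatingP s : alternating s <-> partial_sums01 0 s /\ \sum_(x <- s) x = 1.
Proof.
rewrite /alternating partial_sums01_filter0.
have -> : \sum_(x <- s) x = \sum_(x <- [seq x <- s | x != 0]) x.
  by rewrite big_filter [RHS]big_mkcond; apply: eq_bigr => x _; case: eqP => // ->.
have [signsP _] := partial_sums01_signs (filter_all (fun x => x != 0) s).
set t := [seq x <- s | x != 0] in signsP *.
split=> [/andP[/eqP e o] | [P s1]].
  by split; [apply/signsP | rewrite {1}e (sum_signs _).1 o].
apply/andP; split; first exact/eqP/signsP.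
move: s1; rewrite {1}(signsP.1 P) (sum_signs _).1.
by case: (odd (size t)) => // /eqP; rewrite eq_sym oner_eq0.
Qed.

Lemma sum_take_iota (G : nat -> int) n k :
  \sum_(x <- take k [seq G i | i <- iota 0 n]) x = \sum_(0 <= i < minn k n) G i.
Proof. by rewrite -map_take take_iota big_map /index_iota subn0. Qed.

Lemma sum_iota (G : nat -> int) n :
  \sum_(x <- [seq G i | i <- iota 0 n]) x = \sum_(0 <= i < n) G i.
Proof. by rewrite big_map /index_iota subn0. Qed.

Lemma alternating_telescope (b : nat -> bool) n : b 0%N = false -> b n = true ->
  alternating [seq (b i.+1 : nat)%:Z - (b i : nat)%:Z | i <- iota 0 n].
Proof.
move=> b0 bn; apply/alternatingP; split; last first.
  by rewrite sum_iota (telescope_sumr (fun i => (b i : nat)%:Z)) // b0 bn.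
move=> k; rewrite sum_take_iota (telescope_sumr (fun i => (b i : nat)%:Z)) //.
by rewrite b0 subr0 add0r; case: (b _).
Qed.

(* The row segment +1, -1, ..., -1, +1 with [L] entries -1, starting at column [c]. *)
Definition block (c L j : nat) : entry :=
  if (c <= j <= c + L.*2)%N then Some (~~ odd (j - c)) else None.

Definition block_val c L j := entry_val (block c L j).

Lemma block_val_in c L k : (k <= L.*2)%N -> block_val c L (c + k) = (-1) ^+ k.
Proof.
move=> hk; rewrite /block_val /block leq_addr leq_add2l hk /= addKn.
by rewrite -signr_odd; case: (odd k).
Qed.

Lemma block_val_out c L j : ~~ (c <= j <= c + L.*2)%N -> block_val c L j = 0.
Proof. by rewrite /block_val /block => /negbTE ->. Qed.

Lemma map_const_nseq (T U : Type) (x : U) (s : seq T) : [seq x | _ <- s] = nseq (size s) x.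
Proof. by elim: s => //= a s ->. Qed.

Lemma count_neg_signs L : count (pred1 (-1)) (signs L.*2.+1) = L.
Proof.
elim: L => [|L IH]; first by rewrite signsS.
by rewrite -[in RHS]IH doubleS signsS signs_negS.

Qed.

Section BlockRow.
Variables (c L n : nat).
Hypothesis block_fits : (c + L.*2 < n)%N.

Lemma iota_around_block :
  iota 0 n = iota 0 c ++ iota c L.*2.+1 ++ iota (c + L.*2.+1) (n - (c + L.*2.+1)).
Proof. by rewrite -!iotaD; congr iota; lia. Qed.

Lemma block_row :
  [seq block_val c L j | j <- iota 0 n] =
  nseq c 0 ++ signs L.*2.+1 ++ nseq (n - (c + L.*2.+1)) 0.
Proof.
rewrite iota_around_block !map_cat; congr (_ ++ (_ ++ _)).
- rewrite -[X in nseq X _](size_iota 0 c) -map_const_nseq; apply/eq_in_map => j.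
  by rewrite mem_iota => /andP[_ hj]; apply: block_val_out; lia.
- rewrite -[in iota c _](addn0 c) iotaDl -map_comp; apply/eq_in_map => k.
  by rewrite mem_iota => /andP[_ hk] /=; apply: block_val_in; lia.
- rewrite -[X in nseq X _](size_iota (c + L.*2.+1)) -map_const_nseq; apply/eq_in_map => j.
  by rewrite mem_iota => /andP[hj _]; apply: block_val_out; lia.
Qed.

Lemma alternating_block : alternating [seq block_val c L j | j <- iota 0 n].
Proof.
have nz : all (fun x => x != 0) (signs L.*2.+1).
  by apply/allP => x /mapP[k _ ->]; rewrite signr_eq0.
rewrite /alternating block_row !filter_cat (all_filterP nz) !filter_nseq eqxx /= cats0.
by rewrite size_map size_iota eqxx /= odd_double.
Qed.

Lemma count_neg_block :
  (\sum_(0 <= j < n) ((block_val c L j == -1%R) : nat))%N = L.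
Proof.
transitivity (count (pred1 (-1)) [seq block_val c L j | j <- iota 0 n]).
  rewrite count_map -sum1_count [RHS]big_mkcond /index_iota subn0.
  by rewrite (eq_bigr (fun j => (block_val c L j == -1 : nat))) // => j _; case: ifP.
by rewrite block_row !count_cat !count_nseq count_neg_signs /= !mul0n addn0.
Qed.
End BlockRow.

Lemma map_enum_ord (T : Type) n (F : nat -> T) :
  [seq F (val i) | i <- enum 'I_n] = [seq F i | i <- iota 0 n].
Proof. by rewrite -val_enum_ord -map_comp. Qed.

Lemma io_sum n (d : ASM n) :
  io d = (\sum_(i < n) \sum_(j < n) ((entry_val (val d i j) == -1%R) : nat))%N.
Proof.
rewrite /io -sum1_card (eq_bigl (fun ij : 'I_n * 'I_n => entry_val (val d ij.1 ij.2) == -1));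
  last by move=> ij; rewrite inE.
rewrite -(pair_big_dep xpredT (fun i j => entry_val (val d i j) == -1) (fun _ _ => 1%N)) /=.
by apply: eq_bigr => i _; rewrite big_mkcond /=; apply: eq_bigr => j _; case: ifP.
Qed.

Definition comb (a m j : nat) : bool := (a <= j < a + m.*2)%N && ~~ odd (j - a).

Local Ltac case_atoms :=
  repeat match goal with
  | |- context[odd ?x] => let E := fresh "E" in case E: (odd x)
  | |- context[(?x <= ?y)%N] => let E := fresh "E" in case E: (x <= y)%N
  end.

Lemma block_val_comb a L j :
  block_val a L j = (comb a L.+1 j : nat)%:Z - (comb a.+1 L j : nat)%:Z.
Proof. by rewrite /block_val /block /comb; case_atoms => //=; lia. Qed.

Lemma block_val_comb_last a L j :
  block_val (a + L.*2) 0 j = (comb a L.+1 j : nat)%:Z - (comb a L j : nat)%:Z.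
Proof. by rewrite /block_val /block /comb; case_atoms => //=; lia. Qed.

Definition row_cap n i := minn i (n.-1 - i).

(* For [h] a set of rows, an ASM whose row [i] holds [row_cap n i] entries -1 if
   [h i] and none otherwise.  Its first [i] rows sum, column by column, to
   [col_state i]: a comb of [i] teeth in the upper half, the complement of a comb
   of [n - i] teeth in the lower half.  Each row goes from one state to the next
   by sliding a comb (a full block) or by adding one tooth (a lone +1). *)
Section SubsetASM.
Variables (n : nat) (h : nat -> bool).

Definition mid := n.+1./2.
Definition lo_start i := (\sum_(i <= k < mid) h k)%N.
Definition hi_start i := (1 + \sum_(mid <= k < i) h k)%N.

Definition col_state i j :=
  if (i <= mid)%N then comb (lo_start i) i j else ~~ comb (hi_start i) (n - i) j.

Definition row_neg i := (h i * row_cap n i)%N.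
Definition row_start i :=
  if (i < mid)%N then (lo_start i.+1 + ~~ h i * i.*2)%N
  else (hi_start i + ~~ h i * (n.-1 - i).*2)%N.

Lemma lo_startE i : (i < mid)%N -> lo_start i = (h i + lo_start i.+1)%N.
Proof. by move=> hi; rewrite /lo_start big_ltn. Qed.

Lemma hi_startS i : (mid <= i)%N -> hi_start i.+1 = (hi_start i + h i)%N.
Proof. by move=> hi; rewrite /hi_start big_nat_recr //= addnA. Qed.

Lemma lo_start_le i : (lo_start i <= mid - i)%N.
Proof.
rewrite /lo_start -[X in (_ <= X)%N]muln1 -sum_nat_const_nat.
by apply: leq_sum => k _; case: (h k).
Qed.

Lemma hi_start_le i : (hi_start i <= 1 + (i - mid))%N.
Proof.
rewrite /hi_start leq_add2l -[X in (_ <= X)%N]muln1 -sum_nat_const_nat.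
by apply: leq_sum => k _; case: (h k).
Qed.

Lemma lo_start_mid : lo_start mid = 0%N.
Proof. by rewrite /lo_start big_geq. Qed.

Lemma hi_start_mid : hi_start mid = 1%N.
Proof. by rewrite /hi_start big_geq. Qed.

Lemma col_state0 j : col_state 0 j = false.
Proof. by rewrite /col_state leq0n /comb addn0; case: leqP. Qed.

Lemma col_state_last j : (j < n)%N -> col_state n j = true.
Proof.
move=> hj; rewrite /col_state; case: leqP => hn.
  have n1 : n = 1%N by move: hn; rewrite /mid; lia.
  have mid1 : mid = 1%N by rewrite /mid n1.
  have lo1 : lo_start 1 = 0%N by rewrite -mid1 lo_start_mid.
  have j0 : j = 0%N by lia.
  by rewrite j0 n1 lo1.
by rewrite subnn /comb addn0; case: leqP.
Qed.

Lemma col_state_hi i j : (mid <= i)%N -> (j < n)%N ->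
  col_state i j = ~~ comb (hi_start i) (n - i) j.
Proof.
move=> hi hj; rewrite /col_state; case: leqP => // hi2.
have -> : i = mid by apply/eqP; rewrite eqn_leq hi2 hi.
rewrite lo_start_mid hi_start_mid /comb; move: hj; rewrite /mid; case_atoms => //=; lia.
Qed.

Lemma block_val_row i j : (i < n)%N -> (j < n)%N ->
  block_val (row_start i) (row_neg i) j = (col_state i.+1 j : nat)%:Z - (col_state i j : nat)%:Z.
Proof.
move=> hi hj; rewrite /row_start /row_neg /row_cap; case: ltnP => hmid.
  rewrite /col_state hmid ltnW // (lo_startE hmid).
  case: (h i) => /=; last by rewrite mul1n mul0n add0n block_val_comb_last.
  rewrite mul0n addn0 mul1n add1n (_ : minn _ _ = i); last by rewrite /mid in hmid; lia.
  exact: block_val_comb.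
rewrite (col_state_hi hmid hj) (col_state_hi (leqW hmid) hj) (hi_startS hmid).
have -> : (n - i = (n.-1 - i).+1)%N by lia.
have -> : (n - i.+1 = n.-1 - i)%N by lia.
case: (h i) => /=.
  rewrite mul0n addn0 mul1n (_ : minn _ _ = n.-1 - i)%N; last by rewrite /mid in hmid; lia.
  by rewrite addn1 block_val_comb; do 2 case: (comb _ _ _); rewrite /=; lia.
rewrite mul1n mul0n addn0 block_val_comb_last.
by do 2 case: (comb _ _ _); rewrite /=; lia.
Qed.

Lemma row_block_fits i : (i < n)%N -> (row_start i + (row_neg i).*2 < n)%N.
Proof.
move=> hi; have := lo_start_le i.+1; have := hi_start_le i.
have midE : mid = n.+1./2 by [].
rewrite /row_start /row_neg /row_cap; case: (h i) => /=; case: (ltnP i mid) => ? /=; lia.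
Qed.

Definition subset_mx : 'M[entry]_n := \matrix_(i < n, j < n) block (row_start i) (row_neg i) j.

Lemma subset_mx_asm : is_asm subset_mx.
Proof.
apply/andP; split; apply/forallP => k.
  rewrite (eq_map (g := fun j : 'I_n => block_val (row_start k) (row_neg k) (val j)));
    last by move=> j; rewrite mxE.
  by rewrite map_enum_ord; apply/alternating_block/row_block_fits.
rewrite (eq_map (g := fun i : 'I_n => block_val (row_start (val i)) (row_neg (val i)) k));
  last by move=> i; rewrite mxE.
rewrite (map_enum_ord _ (fun i => block_val (row_start i) (row_neg i) k)).
have -> : [seq block_val (row_start i) (row_neg i) k | i <- iota 0 n] =
          [seq (col_state i.+1 k : nat)%:Z - (col_state i k : nat)%:Z | i <- iota 0 n].
  by apply/eq_in_map => i; rewrite mem_iota => /andP[_ hi]; apply: block_val_row.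
exact: alternating_telescope (col_state0 k) (col_state_last (ltn_ord k)).
Qed.

Definition subset_asm : ASM n := exist _ subset_mx subset_mx_asm.

Lemma io_subset_asm : io subset_asm = (\sum_(i < n) h i * row_cap n i)%N.
Proof.
rewrite io_sum; apply: eq_bigr => i _.
rewrite -[RHS](count_neg_block (row_block_fits (ltn_ord i))) big_mkord.
by apply: eq_bigr => j _; rewrite /= mxE.
Qed.
End SubsetASM.

Lemma Posz_sum_nat m (F : nat -> nat) :
  ((\sum_(0 <= i < m) F i)%N : int) = \sum_(0 <= i < m) (F i : int).
Proof. by rewrite -natz natr_sum; apply: eq_bigr => i _; rewrite natz. Qed.

Section IoBound.
Variables (n : nat) (d : ASM n).

Definition ent (i j : nat) : int :=
  if insub i : option 'I_n is Some i' then
    if insub j : option 'I_n is Some j' then entry_val (val d i' j') else 0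
  else 0.

Lemma entE (i j : 'I_n) : ent i j = entry_val (val d i j).
Proof. by rewrite /ent !valK. Qed.

Lemma alternating_row i : (i < n)%N -> alternating [seq ent i j | j <- iota 0 n].
Proof.
move=> hi; have /forallP /(_ (Ordinal hi)) := (andP (valP d)).1.
by rewrite -(map_enum_ord _ (ent i)) (eq_map (entE (Ordinal hi))).
Qed.

Lemma alternating_col j : (j < n)%N -> alternating [seq ent i j | i <- iota 0 n].
Proof.
move=> hj; have /forallP /(_ (Ordinal hj)) := (andP (valP d)).2.
by rewrite -(map_enum_ord _ (ent^~ j)) (eq_map (entE^~ (Ordinal hj))).
Qed.

Lemma sum_row i : (i < n)%N -> \sum_(0 <= j < n) ent i j = 1.
Proof. by move=> /alternating_row /alternatingP [_]; rewrite sum_iota. Qed.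

Definition col_psum k j := \sum_(0 <= i < k) ent i j.

Lemma col_psum01 k j : (k <= n)%N -> (j < n)%N -> (col_psum k j == 0) || (col_psum k j == 1).
Proof.
move=> hk /alternating_col /alternatingP [P _]; have := P k.
by rewrite add0r sum_take_iota (minn_idPl hk).
Qed.

Lemma col_psumS k j : col_psum k.+1 j = col_psum k j + ent k j.
Proof. by rewrite /col_psum big_nat_recr. Qed.

Lemma sum_col_psum k : (k <= n)%N -> \sum_(0 <= j < n) col_psum k j = k%:Z.
Proof.
move=> hk; rewrite /col_psum exchange_big_nat (eq_big_nat _ _ (F2 := fun=> 1)).
  by rewrite sumr_const_nat subn0 natz.
by move=> i /andP[_ hi]; apply: sum_row; lia.
Qed.

Definition neg_count i := (\sum_(0 <= j < n) ((ent i j == -1%R) : nat))%N.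

(* A -1 at (i, j) needs column partial sum 1 above it and 0 below it; the
   partial sums over the first i rows add up to i, those over the first i + 1
   rows to i + 1 = n - (n - i - 1). *)
Lemma neg_count_le i : (i < n)%N -> (neg_count i <= row_cap n i)%N.
Proof.
move=> hi.
have neg_psum j : (j < n)%N -> ((ent i j == -1 : nat) : int) <= col_psum i j /\
    ((ent i j == -1 : nat) : int) <= 1 - col_psum i.+1 j.
  move=> hj; have := col_psum01 (ltnW hi) hj; have := col_psum01 hi hj.
  rewrite col_psumS; have [->|ne] := eqVneq (ent i j) (-1); rewrite ?(negbTE ne) /=; lia.
have above : (neg_count i : int) <= i%:Z.
  rewrite /neg_count Posz_sum_nat -(sum_col_psum (ltnW hi)).
  by apply: ler_sum_nat => j /andP[_ hj]; apply: (neg_psum j hj).1.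
have below : (neg_count i : int) <= (n - i.+1)%N%:Z.
  have -> : ((n - i.+1)%N : int) = \sum_(0 <= j < n) (1 - col_psum i.+1 j).
    by rewrite sumrB sumr_const_nat subn0 sum_col_psum // -natz; lia.
  rewrite /neg_count Posz_sum_nat.
  by apply: ler_sum_nat => j /andP[_ hj]; apply: (neg_psum j hj).2.
rewrite /row_cap; lia.
Qed.

Lemma io_le_sum_row_cap : (io d <= \sum_(i < n) row_cap n i)%N.
Proof.
rewrite io_sum; apply: leq_sum => i _; apply: leq_trans (neg_count_le (ltn_ord i)).
by rewrite /neg_count big_mkord; under [X in (_ <= X)%N]eq_bigr do rewrite entE.
Qed.
End IoBound.

Lemma dim_ffun (K : fieldType) (I : finType) : dim {ffun I -> K^o} = #|I|.
Proof. exact: muln1. Qed.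

Lemma ffun_basis_decomp (K : fieldType) (I : finType) (v : {ffun I -> K^o}) :
  v = \sum_(i : I) v i *: [ffun x => ((x == i)%:R : K^o)].
Proof.
apply/ffunP => x; rewrite sum_ffunE (bigD1 x) //= big1 => [|i /negbTE nix].
  by rewrite !ffunE eqxx addr0 [_ *: _]mulr1.
by rewrite !ffunE eq_sym nix [_ *: _]mulr0.
Qed.

Section IoQuotient.
Variables (K : fieldType) (n N : nat).
Hypothesis io_lt : forall d : ASM n, (io d < N)%N.
Hypothesis io_onto : forall k : 'I_N, exists d : ASM n, io d = k.

Definition io_fiber_sum (v : ASMn K n) : {ffun 'I_N -> K^o} :=
  [ffun k : 'I_N => \sum_(d : ASM n | io d == k) v d].

Fact io_fiber_sum_is_linear : linear io_fiber_sum.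
Proof.
move=> a u v; apply/ffunP=> k; rewrite !ffunE scaler_sumr -big_split /=.
by apply: eq_bigr => d _; rewrite !ffunE.
Qed.

HB.instance Definition _ := GRing.isLinear.Build K (ASMn K n) {ffun 'I_N -> K^o} _
  io_fiber_sum io_fiber_sum_is_linear.

Definition io_fiber_hom : 'Hom(ASMn K n, {ffun 'I_N -> K^o}) := linfun io_fiber_sum.

Lemma io_fiber_sum_F_M d :
  io_fiber_sum (F_M K d) = [ffun k : 'I_N => ((io d == k)%:R : K)].
Proof.
apply/ffunP=> k; rewrite !ffunE (eq_bigr (fun d' => ((d' == d)%:R : K))); last first.
  by move=> d' _; rewrite ffunE.
case: eqP => [<- | ne]; last first.
  by rewrite big1 // => d' /eqP e; case: eqP => // ed; case: ne; rewrite -ed.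
by rewrite (bigD1 d) //= eqxx big1 ?addr0 // => d' /andP[_ /negbTE ->].
Qed.

Lemma I_io_sub_ker : (I_io K n <= lker io_fiber_hom)%VS.
Proof.
apply/span_subvP => v /allpairsPdep [d1 [d2 [_ ]]].
rewrite mem_filter => /andP[/eqP e _] ->.
by rewrite memv_ker lfunE linearB /= !io_fiber_sum_F_M e subrr.
Qed.

Definition io_rep (d : ASM n) : ASM n := odflt d [pick d' : ASM n | io d' == io d].

Lemma io_rep_io d : io (io_rep d) = io d.
Proof. by rewrite /io_rep; case: pickP => [d' /eqP|]. Qed.

Lemma io_rep_eq d1 d2 : io d1 = io d2 -> io_rep d1 = io_rep d2.
Proof.
move=> e; rewrite /io_rep.
have -> : [pick d' : ASM n | io d' == io d1] = [pick d' : ASM n | io d' == io d2].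
  by apply: eq_pick => d'; rewrite e.
by case: pickP => // /(_ d1); rewrite e eqxx.
Qed.

Lemma ker_sub_I_io : (lker io_fiber_hom <= I_io K n)%VS.
Proof.
apply/subvP => v; rewrite memv_ker lfunE => /eqP fiber0.
have rep_part : \sum_(d : ASM n) v d *: F_M K (io_rep d) = 0.
  apply/ffunP => x; rewrite sum_ffunE ffunE.
  have [rx | nrx] := eqVneq (io_rep x) x; last first.
    rewrite big1 // => d _; rewrite !ffunE.
    case: eqP => [e|]; last by rewrite [_ *: _]mulr0.
    by case/eqP: nrx; rewrite e; apply: io_rep_eq; rewrite io_rep_io.
  have := congr1 (fun f : {ffun 'I_N -> K^o} => f (Ordinal (io_lt x))) fiber0.
  rewrite !ffunE /= => fiber0x; apply: etrans fiber0x; rewrite [RHS]big_mkcond; apply: eq_bigr => d _; rewrite /= !ffunE.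
  have [e | ne] := eqVneq (io d) (io x); first by rewrite (io_rep_eq e) rx eqxx [_ *: _]mulr1.
  case: eqP => [er|]; last by rewrite [_ *: _]mulr0.
  by case/eqP: ne; rewrite er io_rep_io.
have -> : v = \sum_(d : ASM n) v d *: (F_M K d - F_M K (io_rep d)).
  rewrite (eq_bigr _ (fun d _ => scalerBr _ _ _)) sumrB rep_part subr0.
  exact: ffun_basis_decomp.
apply: memv_suml => d _; apply/memvZ/memv_span.
apply/allpairsPdep; exists d, (io_rep d); split; first by rewrite mem_enum.
  by rewrite mem_filter io_rep_io eqxx mem_enum.
by [].
Qed.

Lemma limg_io_fiber_hom : limg io_fiber_hom = fullv.
Proof.
apply/eqP; rewrite eqEsubv subvf /=; apply/subvP => w _.
rewrite [w]ffun_basis_decomp; apply: memv_suml => k _; apply: memvZ.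
have [d dk] := io_onto k.
have -> : [ffun x => ((x == k)%:R : K^o)] = io_fiber_hom (F_M K d).
  by rewrite lfunE /= io_fiber_sum_F_M; apply/ffunP => x; rewrite !ffunE dk eq_sym.
exact: memv_img (memvf _).
Qed.

Lemma quot_dim_io_range : quot_dim K n = N.
Proof.
have := limg_ker_dim io_fiber_hom fullv.
rewrite capfv limg_io_fiber_hom.
have -> : lker io_fiber_hom = I_io K n by apply/eqP; rewrite eqEsubv ker_sub_I_io I_io_sub_ker.
by rewrite /quot_dim => <-; rewrite addKn dimvf dim_ffun card_ord.
Qed.
End IoQuotient.

Lemma sum_row_cap n : (\sum_(i < n) row_cap n i)%N = ((n - 1) ^ 2 %/ 4)%N.
Proof.
rewrite -(big_mkord xpredT (row_cap n)) subn1 -mulnn.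
suff sums m : (\sum_(0 <= i < m) row_cap m i = (m.-1 * m.-1) %/ 4)%N /\
              (\sum_(0 <= i < m.+1) row_cap m.+1 i = (m * m) %/ 4)%N by case: (sums n).
elim: m => [|m [IH IHS]]; first by split; [rewrite big_geq | rewrite big_nat1].
split=> //; rewrite big_nat_recl // big_nat_recr //=.
rewrite (eq_big_nat _ _ (F2 := fun i => row_cap m i + 1)%N); last first.
  by move=> i hi; rewrite /row_cap; lia.
rewrite big_split /= IH sum_nat_const_nat /row_cap.
by case: m {IH IHS} => [|m] //=; nia.
Qed.

(* Greedy from the largest weight: the weights never jump by more than one. *)
Lemma subset_sums_interval (w : nat -> nat) :
  (w 0 <= 1)%N -> (forall i, w i.+1 <= (w i).+1)%N ->
  forall N k, (k <= \sum_(0 <= i < N) w i)%N ->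
  exists h : nat -> bool, (\sum_(0 <= i < N) h i * w i)%N = k.
Proof.
move=> w0 wS.
have w_le_sum N : (w N <= (\sum_(0 <= i < N) w i).+1)%N.
  case: N => [|N]; first by rewrite big_geq.
  by rewrite big_nat_recr //=; have := wS N; lia.
elim=> [|N IH] k.
  by rewrite big_geq // leqn0 => /eqP ->; exists (fun=> false); rewrite big_geq.
rewrite big_nat_recr //= => hk.
have [hkN | hkN] := leqP k (\sum_(0 <= i < N) w i).
  have [h hh] := IH k hkN; exists (fun i => if i == N then false else h i).
  rewrite big_nat_recr //= eqxx mul0n addn0 -hh.
  by apply: eq_big_nat => i /andP[_ hi]; rewrite ltn_eqF.
have [h hh] := IH (k - w N)%N (ltac:(lia)); exists (fun i => if i == N then true else h i).
rewrite big_nat_recr //= eqxx mul1n.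
rewrite (eq_big_nat _ _ (F2 := fun i => h i * w i)%N); last first.
  by move=> i /andP[_ hi]; rewrite ltn_eqF.
by have := w_le_sum N; lia.
Qed.

Theorem proposition4p6 (K : fieldType) (charK0 : [pchar K]%R =i pred0) (n : nat) :
  quot_dim K n = ((n - 1) ^ 2 %/ 4 + 1)%N.
Proof.
rewrite addn1 -sum_row_cap; apply: quot_dim_io_range => [d | k].
  by rewrite ltnS; apply: io_le_sum_row_cap.
have row_cap0 : (row_cap n 0 <= 1)%N by rewrite /row_cap min0n.
have row_capS i : (row_cap n i.+1 <= (row_cap n i).+1)%N by rewrite /row_cap; lia.
have k_le : (k <= \sum_(0 <= i < n) row_cap n i)%N by rewrite big_mkord -ltnS.
have [h io_h] := subset_sums_interval row_cap0 row_capS k_le.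
by exists (subset_asm n h); rewrite io_subset_asm -io_h big_mkord.
Qed.
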